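(* Let $g_1,g_2$ be holomorphic functions on a domain $\mathcal{D}\subset\mathbb{C}$ with $g_1'g_2'\neq0$, let $\sqrt{g_1'g_2'}$ be a holomorphic branch, let $\Phi=\bigl(\tfrac{\mathrm{i}}{2}\tfrac{g_1g_2+1}{\sqrt{g_1'g_2'}},\ \tfrac12\tfrac{g_1g_2-1}{\sqrt{g_1'g_2'}},\ \tfrac12\tfrac{g_1+g_2}{\sqrt{g_1'g_2'}},\ \tfrac{\mathrm{i}}{2}\tfrac{g_1-g_2}{\sqrt{g_1'g_2'}}\bigr)$, let $\Psi$ be holomorphic on $\mathcal{D}$ with $\Psi'=\Phi$, and let $\mathcal{M}$ be the minimal surface $\mathrm{x}(u,v)=\operatorname{Re}\Psi(u+\mathrm{i}v)$ in $\mathbb{R}^4$. Then its first fundamental form is $E(du^2+dv^2)$ with $$E=\frac{(|g_1|^2+1)(|g_2|^2+1)}{4|g_1'g_2'|},$$ and its Gauss curvature $K$ and normal curvature $\varkappa$ are $$K=\frac{-8|g_1'g_2'|}{(|g_1|^2+1)(|g_2|^2+1)}\left(\frac{|g_1'|^2}{(|g_1|^2+1)^2}+\frac{|g_2'|^2}{(|g_2|^2+1)^2}\right),$$ $$\varkappa=\frac{8|g_1'g_2'|}{(|g_1|^2+1)(|g_2|^2+1)}\left(\frac{|g_1'|^2}{(|g_1|^2+1)^2}-\frac{|g_2'|^2}{(|g_2|^2+1)^2}\right).$$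
   Context: The normal curvature is defined as follows: let $X_1=\mathrm{x}_u/\|\mathrm{x}_u\|$, $X_2=\mathrm{x}_v/\|\mathrm{x}_v\|$, and let $n_1,n_2$ be orthonormal normal vector fields such that $(X_1,X_2,n_1,n_2)$ is a positively oriented orthonormal basis of $\mathbb{R}^4$ (standard orientation); with $A_n$ the Weingarten operator, $\varkappa=A_{n_1}X_1\cdot A_{n_2}X_2-A_{n_2}X_1\cdot A_{n_1}X_2$. *)

From Stdlib Require Import Reals.
From Coquelicot Require Import Coquelicot.
Open Scope R_scope.

Definition connected_set (D : C -> Prop) : Prop :=
  forall U V : C -> Prop, open U -> open V ->
    (forall z, D z -> U z \/ V z) ->
    (forall z, D z -> U z -> V z -> False) ->
    (forall z, D z -> ~ U z) \/ (forall z, D z -> ~ V z).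

Definition is_domain (D : C -> Prop) : Prop :=
  open D /\ (exists z, D z) /\ connected_set D.

Definition has_cderiv (f : C -> C) (z l : C) : Prop :=
  @is_derive C_AbsRing C_NormedModule f z l.

Definition holomorphic_on (D : C -> Prop) (f : C -> C) : Prop :=
  forall z, D z -> @ex_derive C_AbsRing C_NormedModule f z.

Definition V4 : Type := (R * R * R * R)%type.
Definition mk4 (a b c d : R) : V4 := (a, b, c, d).
Definition c1 (x : V4) : R := fst (fst (fst x)).
Definition c2 (x : V4) : R := snd (fst (fst x)).
Definition c3 (x : V4) : R := snd (fst x).
Definition c4 (x : V4) : R := snd x.

Definition dot4 (x y : V4) : R :=
  c1 x * c1 y + c2 x * c2 y + c3 x * c3 y + c4 x * c4 y.
Definition norm4 (x : V4) : R := sqrt (dot4 x x).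
Definition add4 (x y : V4) : V4 :=
  mk4 (c1 x + c1 y) (c2 x + c2 y) (c3 x + c3 y) (c4 x + c4 y).
Definition scal4 (a : R) (x : V4) : V4 :=
  mk4 (a * c1 x) (a * c2 x) (a * c3 x) (a * c4 x).

Definition det3 (x1 x2 x3 y1 y2 y3 z1 z2 z3 : R) : R :=
  x1 * (y2 * z3 - y3 * z2) - x2 * (y1 * z3 - y3 * z1) + x3 * (y1 * z2 - y2 * z1).

Definition det4 (a b c d : V4) : R :=
    c1 a * det3 (c2 b) (c3 b) (c4 b) (c2 c) (c3 c) (c4 c) (c2 d) (c3 d) (c4 d)
  - c2 a * det3 (c1 b) (c3 b) (c4 b) (c1 c) (c3 c) (c4 c) (c1 d) (c3 d) (c4 d)
  + c3 a * det3 (c1 b) (c2 b) (c4 b) (c1 c) (c2 c) (c4 c) (c1 d) (c2 d) (c4 d)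
  - c4 a * det3 (c1 b) (c2 b) (c3 b) (c1 c) (c2 c) (c3 c) (c1 d) (c2 d) (c3 d).

Definition pu (f : R -> R -> V4) (u v : R) : V4 :=
  mk4 (Derive (fun t => c1 (f t v)) u) (Derive (fun t => c2 (f t v)) u)
      (Derive (fun t => c3 (f t v)) u) (Derive (fun t => c4 (f t v)) u).
Definition pv (f : R -> R -> V4) (u v : R) : V4 :=
  mk4 (Derive (fun t => c1 (f u t)) v) (Derive (fun t => c2 (f u t)) v)
      (Derive (fun t => c3 (f u t)) v) (Derive (fun t => c4 (f u t)) v).

Definition partials_exist (f : R -> R -> V4) (u v : R) : Prop :=
  ex_derive (fun t => c1 (f t v)) u /\ ex_derive (fun t => c2 (f t v)) u /\
  ex_derive (fun t => c3 (f t v)) u /\ ex_derive (fun t => c4 (f t v)) u /\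
  ex_derive (fun t => c1 (f u t)) v /\ ex_derive (fun t => c2 (f u t)) v /\
  ex_derive (fun t => c3 (f u t)) v /\ ex_derive (fun t => c4 (f u t)) v.

Definition ffE (x : R -> R -> V4) u v : R := dot4 (pu x u v) (pu x u v).
Definition ffF (x : R -> R -> V4) u v : R := dot4 (pu x u v) (pv x u v).
Definition ffG (x : R -> R -> V4) u v : R := dot4 (pv x u v) (pv x u v).

Definition X1 (x : R -> R -> V4) u v : V4 := scal4 (/ norm4 (pu x u v)) (pu x u v).
Definition X2 (x : R -> R -> V4) u v : V4 := scal4 (/ norm4 (pv x u v)) (pv x u v).

Definition tang (x : R -> R -> V4) u v (w : V4) : V4 :=
  add4 (scal4 (dot4 w (X1 x u v)) (X1 x u v)) (scal4 (dot4 w (X2 x u v)) (X2 x u v)).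

(* Weingarten operator A_n : A_n X = - (D_X n)^T, evaluated on X1 and X2;
   D_{X1} n = n_u / |x_u|,  D_{X2} n = n_v / |x_v|. *)
Definition A_X1 (x n : R -> R -> V4) u v : V4 :=
  scal4 (-1) (tang x u v (scal4 (/ norm4 (pu x u v)) (pu n u v))).
Definition A_X2 (x n : R -> R -> V4) u v : V4 :=
  scal4 (-1) (tang x u v (scal4 (/ norm4 (pv x u v)) (pv n u v))).

Definition normal_frame (P : R -> R -> Prop) (x n1 n2 : R -> R -> V4) : Prop :=
  forall u v, P u v ->
    dot4 (n1 u v) (n1 u v) = 1 /\ dot4 (n2 u v) (n2 u v) = 1 /\
    dot4 (n1 u v) (n2 u v) = 0 /\
    dot4 (n1 u v) (X1 x u v) = 0 /\ dot4 (n1 u v) (X2 x u v) = 0 /\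
    dot4 (n2 u v) (X1 x u v) = 0 /\ dot4 (n2 u v) (X2 x u v) = 0 /\
    0 < det4 (X1 x u v) (X2 x u v) (n1 u v) (n2 u v) /\
    partials_exist n1 u v /\ partials_exist n2 u v.

Definition normal_curvature (x n1 n2 : R -> R -> V4) u v : R :=
  dot4 (A_X1 x n1 u v) (A_X2 x n2 u v) - dot4 (A_X1 x n2 u v) (A_X2 x n1 u v).

(* Gauss curvature via the Gauss equation:
   K = det A_{n1} + det A_{n2}  (matrices in the orthonormal basis X1, X2) *)
Definition detA (x n : R -> R -> V4) u v : R :=
  dot4 (A_X1 x n u v) (X1 x u v) * dot4 (A_X2 x n u v) (X2 x u v)
  - dot4 (A_X1 x n u v) (X2 x u v) * dot4 (A_X2 x n u v) (X1 x u v).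
Definition gauss_curvature (x n1 n2 : R -> R -> V4) u v : R :=
  detA x n1 u v + detA x n2 u v.

From Stdlib Require Import Reals Lra.
From Coquelicot Require Import Coquelicot.
From Pilot Require Import Defs.
Open Scope R_scope.

(* By the Cauchy-Riemann equations [x_u = Re Phi] and [x_v = - Im Phi], where
   [Phi = W / s] and [W] is the Weierstrass vector of [(g1, g2)].  [W] is isotropic
   ([W . W = 0] for the complex bilinear product), which gives [E = G = |Phi|^2 / 2] and
   [F = 0].  A normal field [n] is orthogonal to [Re W] and [Im W] on the whole domain;
   differentiating these relations expresses the second fundamental form through
   [S + i T = W' / s], where [W'] is the derivative of [W] along [z].  In the orthonormal
   frame [(X1, X2, n1, n2)], Parseval's identity and a determinant identity give
   [E^3 K = - ((|S|^2 + |T|^2) E - sum_(Y = S, T; j = u, v) (Y . x_j)^2)] and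
   [E^3 kappa = - 2 det (x_u, x_v, S, T)]; both right-hand sides scale by [|1/s|^4] under
   [W -> W / s], and a polynomial identity in [g1, g2, g1', g2'] finishes the computation. *)

(** * Complex derivatives along lines *)

Definition uv_to_C (u v : R) : C := (RtoC u + Ci * RtoC v)%C.

Lemma uv_to_C_u (t v : R) : uv_to_C t v = (Ci * RtoC v + RtoC t * 1)%C.
Proof. apply injective_projections; unfold uv_to_C; simpl; ring. Qed.

Lemma uv_to_C_v (u t : R) : uv_to_C u t = (RtoC u + RtoC t * Ci)%C.
Proof. apply injective_projections; unfold uv_to_C; simpl; ring. Qed.

Lemma has_cderiv_eq (f : C -> C) (z l l' : C) : has_cderiv f z l -> l = l' -> has_cderiv f z l'.
Proof. now intros H <-. Qed.

Lemma has_cderiv_const (c z : C) : has_cderiv (fun _ => c) z 0%C.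
Proof. exact (@is_derive_const C_AbsRing C_NormedModule c z). Qed.

Lemma has_cderiv_plus (f g : C -> C) (z df dg : C) :
  has_cderiv f z df -> has_cderiv g z dg -> has_cderiv (fun w => f w + g w)%C z (df + dg)%C.
Proof. exact (@is_derive_plus C_AbsRing C_NormedModule f g z df dg). Qed.

Lemma has_cderiv_minus (f g : C -> C) (z df dg : C) :
  has_cderiv f z df -> has_cderiv g z dg -> has_cderiv (fun w => f w - g w)%C z (df - dg)%C.
Proof. exact (@is_derive_minus C_AbsRing C_NormedModule f g z df dg). Qed.

Lemma has_cderiv_mult (f g : C -> C) (z df dg : C) :
  has_cderiv f z df -> has_cderiv g z dg ->
  has_cderiv (fun w => f w * g w)%C z (df * g z + f z * dg)%C.
Proof.
  intros [_ Hf] [_ Hg].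
  pose proof (is_derive_mult f g z df dg (conj (is_linear_scal_l _) Hf) (conj (is_linear_scal_l _) Hg)
    Cmult_comm) as [_ H].
  exact (conj (is_linear_scal_l _) H).
Qed.

Lemma has_cderiv_scal (c : C) (f : C -> C) (z df : C) :
  has_cderiv f z df -> has_cderiv (fun w => c * f w)%C z (c * df)%C.
Proof.
  intros Hf. eapply has_cderiv_eq; [exact (has_cderiv_mult _ _ z _ _ (has_cderiv_const c z) Hf)|].
  cbv beta; ring.
Qed.

Lemma locally_line (P : C -> Prop) (a w : C) (t0 : R) :
  locally (a + RtoC t0 * w)%C P -> locally t0 (fun t => P (a + RtoC t * w)%C).
Proof.
  intros [e He].
  set (M := Rabs (Re w) + Rabs (Im w) + 1).
  assert (HM : 0 < M) by (unfold M; pose proof (Rabs_pos (Re w)); pose proof (Rabs_pos (Im w)); lra).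
  assert (Hd : 0 < e / M) by (apply Rdiv_lt_0_compat; [apply cond_pos | exact HM]).
  exists (mkposreal _ Hd); intros t Ht; apply He.
  change (Rabs (t - t0) < e / M) in Ht.
  assert (Hcomp : forall r, Rabs r <= M - 1 -> Rabs ((t - t0) * r) < e).
  { intros r Hr. rewrite Rabs_mult.
    apply Rle_lt_trans with (Rabs (t - t0) * M); [|apply Rlt_div_r in Ht; lra].
    apply Rmult_le_compat_l; [apply Rabs_pos | lra]. }
  split; cbn -[Rabs].
  - change (Rabs (Re (a + RtoC t * w)%C - Re (a + RtoC t0 * w)%C) < e).
    replace (Re (a + RtoC t * w)%C - Re (a + RtoC t0 * w)%C) with ((t - t0) * Re w)
      by (unfold Re; simpl; ring).
    apply Hcomp; unfold M; pose proof (Rabs_pos (Im w)); lra.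
  - change (Rabs (Im (a + RtoC t * w)%C - Im (a + RtoC t0 * w)%C) < e).
    replace (Im (a + RtoC t * w)%C - Im (a + RtoC t0 * w)%C) with ((t - t0) * Im w)
      by (unfold Im; simpl; ring).
    apply Hcomp; unfold M; pose proof (Rabs_pos (Re w)); lra.
Qed.

Lemma locally_uv (D : C -> Prop) (u v : R) :
  open D -> D (uv_to_C u v) ->
  locally u (fun t => D (uv_to_C t v)) /\ locally v (fun t => D (uv_to_C u t)).
Proof.
  intros HD Hz; split.
  - rewrite uv_to_C_u in Hz.
    apply (filter_imp (fun t => D (Ci * RtoC v + RtoC t * 1)%C)); [intros t; now rewrite uv_to_C_u|].
    exact (locally_line D _ _ u (HD _ Hz)).
  - rewrite uv_to_C_v in Hz.
    apply (filter_imp (fun t => D (RtoC u + RtoC t * Ci)%C)); [intros t; now rewrite uv_to_C_v|].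
    exact (locally_line D _ _ v (HD _ Hz)).
Qed.

Lemma is_derive_Re_line (h : C -> C) (a w : C) (t0 : R) (l : C) :
  has_cderiv h (a + RtoC t0 * w)%C l ->
  is_derive (fun t => Re (h (a + RtoC t * w)%C)) t0 (Re (w * l)).
Proof.
  intros [_ Hh].
  split; [apply is_linear_scal_l|].
  intros x Hx; apply (@is_filter_lim_locally_unique R_AbsRing (AbsRing_NormedModule R_AbsRing)) in Hx; subst x.
  intros eps.
  set (z := (a + RtoC t0 * w)%C).
  assert (HM : 0 < Cmod w + 1) by (pose proof (Cmod_ge_0 w); lra).
  assert (He : 0 < eps / (Cmod w + 1)) by (apply Rdiv_lt_0_compat; [apply cond_pos | exact HM]).
  specialize (Hh z (fun P HP => HP) (mkposreal _ He)).
  apply locally_C, locally_line in Hh.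
  eapply filter_imp; [|exact Hh]; intros t Ht; cbn -[Cmod] in Ht.
  change (Cmod (h (a + RtoC t * w) - h z - (a + RtoC t * w - z) * l)%C
          <= eps / (Cmod w + 1) * Cmod (a + RtoC t * w - z)%C) in Ht.
  replace (a + RtoC t * w - z)%C with (RtoC (t - t0) * w)%C in Ht
    by (unfold z; apply injective_projections; simpl; ring).
  rewrite Cmod_mult, Cmod_R in Ht.
  change (Rabs (Re (h (a + RtoC t * w)%C) - Re (h z) - (t - t0) * Re (w * l)) <= eps * Rabs (t - t0)).
  replace (Re (h (a + RtoC t * w)%C) - Re (h z) - (t - t0) * Re (w * l))
    with (Re (h (a + RtoC t * w) - h z - RtoC (t - t0) * w * l)%C)
    by (unfold Re; simpl; ring).
  eapply Rle_trans; [apply re_le_Cmod|].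
  eapply Rle_trans; [exact Ht|].
  pose proof (Rabs_pos (t - t0)); pose proof (Cmod_ge_0 w); pose proof (cond_pos eps).
  apply Rle_trans with (eps / (Cmod w + 1) * ((Cmod w + 1) * Rabs (t - t0))).
  - apply Rmult_le_compat_l; [lra | nra].
  - right; field; lra.
Qed.

Lemma is_derive_Im_line (h : C -> C) (a w : C) (t0 : R) (l : C) :
  has_cderiv h (a + RtoC t0 * w)%C l ->
  is_derive (fun t => Im (h (a + RtoC t * w)%C)) t0 (Im (w * l)).
Proof.
  intros H.
  apply (is_derive_ext (fun t => Re (- Ci * h (a + RtoC t * w)))%C).
  { intros t; unfold Re, Im; simpl; ring. }
  replace (Im (w * l)) with (Re (w * (- Ci * l)))%C by (unfold Re, Im; simpl; ring).
  exact (is_derive_Re_line _ _ _ _ _ (has_cderiv_scal _ _ _ _ H)).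
Qed.

Lemma is_derive_uv_u (h : C -> C) (u v : R) (l : C) :
  has_cderiv h (uv_to_C u v) l ->
  is_derive (fun t => Re (h (uv_to_C t v))) u (Re l) /\
  is_derive (fun t => Im (h (uv_to_C t v))) u (Im l).
Proof.
  rewrite uv_to_C_u; intros H.
  rewrite <- (Cmult_1_l l).
  split; (eapply is_derive_ext; [intros t; rewrite uv_to_C_u; reflexivity|]).
  - exact (is_derive_Re_line _ _ _ _ _ H).
  - exact (is_derive_Im_line _ _ _ _ _ H).
Qed.

Lemma is_derive_uv_v (h : C -> C) (u v : R) (l : C) :
  has_cderiv h (uv_to_C u v) l ->
  is_derive (fun t => Re (h (uv_to_C u t))) v (Re (Ci * l)) /\
  is_derive (fun t => Im (h (uv_to_C u t))) v (Im (Ci * l)).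
Proof.
  rewrite uv_to_C_v; intros H.
  split; (eapply is_derive_ext; [intros t; rewrite uv_to_C_v; reflexivity|]).
  - exact (is_derive_Re_line _ _ _ _ _ H).
  - exact (is_derive_Im_line _ _ _ _ _ H).
Qed.

(** * Vectors and orthonormal frames of R^4 *)

Ltac unfold_V4 := unfold dot4, add4, scal4, mk4, Defs.c1, Defs.c2, Defs.c3, Defs.c4; simpl.

Definition lin2 (a : R) (A : V4) (b : R) (B : V4) : V4 := add4 (scal4 a A) (scal4 b B).

Definition lin4 (a1 : R) (e1 : V4) (a2 : R) (e2 : V4) (a3 : R) (e3 : V4) (a4 : R) (e4 : V4) : V4 :=
  add4 (lin2 a1 e1 a2 e2) (lin2 a3 e3 a4 e4).

Lemma dot4_comm (x y : V4) : dot4 x y = dot4 y x.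
Proof. unfold dot4; ring. Qed.

Lemma dot4_scal4_l (k : R) (x y : V4) : dot4 (scal4 k x) y = k * dot4 x y.
Proof. unfold_V4; ring. Qed.

Lemma dot4_scal4_r (k : R) (x y : V4) : dot4 x (scal4 k y) = k * dot4 x y.
Proof. unfold_V4; ring. Qed.

Lemma dot4_lin2_l (a b : R) (A B y : V4) : dot4 (lin2 a A b B) y = a * dot4 A y + b * dot4 B y.
Proof. unfold lin2; unfold_V4; ring. Qed.

Lemma dot4_lin2_r (a b : R) (x A B : V4) : dot4 x (lin2 a A b B) = a * dot4 x A + b * dot4 x B.
Proof. unfold lin2; unfold_V4; ring. Qed.

Lemma dot4_lin4_r (a1 a2 a3 a4 : R) (x e1 e2 e3 e4 : V4) :
  dot4 x (lin4 a1 e1 a2 e2 a3 e3 a4 e4) =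
  a1 * dot4 x e1 + a2 * dot4 x e2 + a3 * dot4 x e3 + a4 * dot4 x e4.
Proof. unfold lin4, lin2; unfold_V4; ring. Qed.

Lemma scal4_1 (x : V4) : scal4 1 x = x.
Proof. destruct x as [[[x1 x2] x3] x4]; unfold_V4; f_equal; [f_equal; [f_equal|]|]; ring. Qed.

Definition frame_coords (e1 e2 e3 e4 w : V4) : V4 :=
  mk4 (dot4 e1 w) (dot4 e2 w) (dot4 e3 w) (dot4 e4 w).

(* [det (A^T B) = det A * det B] for the matrices with columns [a b c d] and [p q r s]. *)
Lemma det4_mul (a b c d p q r s : V4) :
  det4 a b c d * det4 p q r s =
  det4 (frame_coords a b c d p) (frame_coords a b c d q) (frame_coords a b c d r)
       (frame_coords a b c d s).
Proof.
  destruct a as [[[a1 a2] a3] a4], b as [[[b1 b2] b3] b4], c as [[[c1 c2] c3] c4],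
    d as [[[d1 d2] d3] d4], p as [[[p1 p2] p3] p4], q as [[[q1 q2] q3] q4],
    r as [[[r1 r2] r3] r4], s as [[[s1 s2] s3] s4].
  unfold frame_coords, det4, det3; unfold_V4; ring.
Qed.

Lemma det4_cramer (a b c d r : V4) :
  scal4 (det4 a b c d) r =
  lin4 (det4 r b c d) a (det4 a r c d) b (det4 a b r d) c (det4 a b c r) d.
Proof.
  destruct a as [[[a1 a2] a3] a4], b as [[[b1 b2] b3] b4], c as [[[c1 c2] c3] c4],
    d as [[[d1 d2] d3] d4], r as [[[r1 r2] r3] r4].
  unfold lin4, lin2, det4, det3; unfold_V4; f_equal; [f_equal; [f_equal|]|]; ring.
Qed.

Definition orthonormal4 (e1 e2 e3 e4 : V4) : Prop :=
  dot4 e1 e1 = 1 /\ dot4 e2 e2 = 1 /\ dot4 e3 e3 = 1 /\ dot4 e4 e4 = 1 /\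
  dot4 e1 e2 = 0 /\ dot4 e1 e3 = 0 /\ dot4 e1 e4 = 0 /\
  dot4 e2 e3 = 0 /\ dot4 e2 e4 = 0 /\ dot4 e3 e4 = 0.

Section OrthonormalFrame.

Variables e1 e2 e3 e4 : V4.
Hypothesis Hon : orthonormal4 e1 e2 e3 e4.
Hypothesis Hpos : 0 < det4 e1 e2 e3 e4.

Let coords := frame_coords e1 e2 e3 e4.

Lemma frame_coords_basis :
  coords e1 = mk4 1 0 0 0 /\ coords e2 = mk4 0 1 0 0 /\
  coords e3 = mk4 0 0 1 0 /\ coords e4 = mk4 0 0 0 1.
Proof.
  destruct Hon as (H11 & H22 & H33 & H44 & H12 & H13 & H14 & H23 & H24 & H34).
  unfold coords, frame_coords.
  rewrite (dot4_comm e2 e1), (dot4_comm e3 e1), (dot4_comm e4 e1), (dot4_comm e3 e2),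
    (dot4_comm e4 e2), (dot4_comm e4 e3).
  rewrite H11, H22, H33, H44, H12, H13, H14, H23, H24, H34; auto.
Qed.

Lemma det4_orthonormal : det4 e1 e2 e3 e4 = 1.
Proof.
  assert (Hsq : det4 e1 e2 e3 e4 * det4 e1 e2 e3 e4 = 1).
  { rewrite det4_mul; fold coords.
    destruct frame_coords_basis as (-> & -> & -> & ->).
    unfold det4, det3, mk4, Defs.c1, Defs.c2, Defs.c3, Defs.c4; simpl; ring. }
  nra.
Qed.

Lemma det4_frame (p q r s : V4) : det4 p q r s = det4 (coords p) (coords q) (coords r) (coords s).
Proof. rewrite <- (Rmult_1_l (det4 p q r s)), <- det4_orthonormal. apply det4_mul. Qed.

Lemma det4_frame_12 (r s : V4) :
  det4 e1 e2 r s = dot4 e3 r * dot4 e4 s - dot4 e4 r * dot4 e3 s.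
Proof.
  rewrite det4_frame. destruct frame_coords_basis as (-> & -> & _ & _).
  unfold coords, frame_coords, det4, det3, mk4, Defs.c1, Defs.c2, Defs.c3, Defs.c4; simpl; ring.
Qed.

Lemma frame_expansion (r : V4) :
  r = lin4 (dot4 e1 r) e1 (dot4 e2 r) e2 (dot4 e3 r) e3 (dot4 e4 r) e4.
Proof.
  rewrite <- (scal4_1 r) at 1.
  rewrite <- det4_orthonormal, det4_cramer, (det4_frame r), (det4_frame e1 r), (det4_frame e1 e2 r),
    (det4_frame e1 e2 e3 r).
  destruct frame_coords_basis as (-> & -> & -> & ->).
  unfold coords, frame_coords, det4, det3, mk4, Defs.c1, Defs.c2, Defs.c3, Defs.c4; simpl.
  f_equal; ring.
Qed.

Lemma frame_parseval (r : V4) :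
  dot4 r r = dot4 e1 r ^ 2 + dot4 e2 r ^ 2 + dot4 e3 r ^ 2 + dot4 e4 r ^ 2.
Proof.
  rewrite (frame_expansion r) at 2. rewrite dot4_lin4_r.
  rewrite !(dot4_comm r). ring.
Qed.

End OrthonormalFrame.

Lemma scal4_opp_lin2 (a b : R) (X Y : V4) :
  scal4 (-1) (add4 (scal4 a X) (scal4 b Y)) = lin2 (- a) X (- b) Y.
Proof.
  destruct X as [[[x1 x2] x3] x4], Y as [[[y1 y2] y3] y4].
  unfold lin2; unfold_V4; f_equal; [f_equal; [f_equal|]|]; ring.
Qed.

Lemma det4_scal4_12 (k : R) (a b c d : V4) : det4 (scal4 k a) (scal4 k b) c d = k * k * det4 a b c d.
Proof.
  destruct a as [[[a1 a2] a3] a4], b as [[[b1 b2] b3] b4], c as [[[c1 c2] c3] c4],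
    d as [[[d1 d2] d3] d4].
  unfold det4, det3; unfold_V4; ring.
Qed.

Lemma dot4_scal4_r_eq0 (k : R) (m w : V4) : k <> 0 -> dot4 m (scal4 k w) = 0 -> dot4 m w = 0.
Proof. rewrite dot4_scal4_r; intros Hk H; apply Rmult_integral in H; tauto. Qed.

(** * Curves in R^4 *)

Definition is_derive4 (f : R -> V4) (t : R) (l : V4) : Prop :=
  is_derive (fun s => c1 (f s)) t (c1 l) /\ is_derive (fun s => c2 (f s)) t (c2 l) /\
  is_derive (fun s => c3 (f s)) t (c3 l) /\ is_derive (fun s => c4 (f s)) t (c4 l).

Lemma partials_exist_is_derive4 (n : R -> R -> V4) (u v : R) :
  partials_exist n u v ->
  is_derive4 (fun t => n t v) u (pu n u v) /\ is_derive4 (fun t => n u t) v (pv n u v).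
Proof. intros (E1 & E2 & E3 & E4 & E5 & E6 & E7 & E8); repeat split; now apply Derive_correct. Qed.

Lemma pu_is_derive4 (x : R -> R -> V4) (u v : R) (l : V4) :
  is_derive4 (fun t => x t v) u l -> pu x u v = l.
Proof.
  intros (H1 & H2 & H3 & H4); unfold pu.
  destruct l as [[[l1 l2] l3] l4].
  unfold mk4; repeat f_equal; now apply is_derive_unique.
Qed.

Lemma pv_is_derive4 (x : R -> R -> V4) (u v : R) (l : V4) :
  is_derive4 (fun t => x u t) v l -> pv x u v = l.
Proof.
  intros (H1 & H2 & H3 & H4); unfold pv.
  destruct l as [[[l1 l2] l3] l4].
  unfold mk4; repeat f_equal; now apply is_derive_unique.
Qed.

Lemma is_derive_eq_val (f : R -> R) (t l l' : R) : is_derive f t l -> l = l' -> is_derive f t l'.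
Proof. now intros H <-. Qed.

Lemma is_derive4_dot4 (f g : R -> V4) (t : R) (df dg : V4) :
  is_derive4 f t df -> is_derive4 g t dg ->
  is_derive (fun s => dot4 (f s) (g s)) t (dot4 df (g t) + dot4 (f t) dg).
Proof.
  intros (F1 & F2 & F3 & F4) (G1 & G2 & G3 & G4).
  pose proof (is_derive_plus _ _ _ _ _
    (is_derive_plus _ _ _ _ _
      (is_derive_plus _ _ _ _ _ (Derive.is_derive_mult _ _ _ _ _ F1 G1)
         (Derive.is_derive_mult _ _ _ _ _ F2 G2))
      (Derive.is_derive_mult _ _ _ _ _ F3 G3))
    (Derive.is_derive_mult _ _ _ _ _ F4 G4)) as H.
  unfold dot4; eapply is_derive_eq_val; [exact H | unfold plus; simpl; ring].
Qed.

Lemma dot4_deriv_orth (f g : R -> V4) (t : R) (df dg : V4) :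
  is_derive4 f t df -> is_derive4 g t dg -> locally t (fun s => dot4 (f s) (g s) = 0) ->
  dot4 df (g t) = - dot4 (f t) dg.
Proof.
  intros Hf Hg Hloc.
  assert (H0 : is_derive (fun _ => 0) t (dot4 df (g t) + dot4 (f t) dg))
    by exact (is_derive_ext_loc _ _ t _ Hloc (is_derive4_dot4 f g t df dg Hf Hg)).
  pose proof (is_derive_unique _ _ _ H0) as E. rewrite Derive_const in E. lra.
Qed.

(** * Curvatures of a conformal chart *)

(* The second fundamental form [h_ij = - n_i . x_j] in the normal direction [n] is
   [[n.S, -n.T], [-n.T, -n.S]]; in particular it is trace free. *)
Definition minimal_sff (x n : R -> R -> V4) (u v : R) (S T : V4) : Prop :=
  dot4 (pu n u v) (pu x u v) = - dot4 (n u v) S /\ dot4 (pu n u v) (pv x u v) = dot4 (n u v) T /\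
  dot4 (pv n u v) (pu x u v) = dot4 (n u v) T /\ dot4 (pv n u v) (pv x u v) = dot4 (n u v) S.

Definition gauss_numerator (L : R) (P Q S T : V4) : R :=
  (dot4 S S + dot4 T T) * L - (dot4 S P ^ 2 + dot4 S Q ^ 2 + dot4 T P ^ 2 + dot4 T Q ^ 2).

Section ConformalChart.

Variables (x : R -> R -> V4) (u v L : R).
Hypothesis HE : dot4 (pu x u v) (pu x u v) = L.
Hypothesis HG : dot4 (pv x u v) (pv x u v) = L.
Hypothesis HF : dot4 (pu x u v) (pv x u v) = 0.
Hypothesis HL : 0 < L.

Let sqrtL_sq : sqrt L * sqrt L = L.
Proof. apply sqrt_sqrt; lra. Qed.

Let sqrtL_pos : 0 < sqrt L.
Proof. apply sqrt_lt_R0; lra. Qed.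

Ltac field_sqrtL :=
  pose proof sqrtL_sq as Hsq; pose proof sqrtL_pos as Hpos;
  set (r := sqrt L) in *; try rewrite <- Hsq; field; lra.

Lemma X1_conformal : X1 x u v = scal4 (/ sqrt L) (pu x u v).
Proof. unfold X1, norm4; now rewrite HE. Qed.

Lemma X2_conformal : X2 x u v = scal4 (/ sqrt L) (pv x u v).
Proof. unfold X2, norm4; now rewrite HG. Qed.

Lemma X12_orthonormal :
  dot4 (X1 x u v) (X1 x u v) = 1 /\ dot4 (X2 x u v) (X2 x u v) = 1 /\
  dot4 (X1 x u v) (X2 x u v) = 0.
Proof.
  rewrite X1_conformal, X2_conformal, !dot4_scal4_l, !dot4_scal4_r, HE, HG, HF.
  repeat split; field_sqrtL.
Qed.

Lemma dot4_lin2_X12 (a b c d : R) :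
  dot4 (lin2 a (X1 x u v) b (X2 x u v)) (lin2 c (X1 x u v) d (X2 x u v)) = a * c + b * d /\
  dot4 (lin2 a (X1 x u v) b (X2 x u v)) (X1 x u v) = a /\
  dot4 (lin2 a (X1 x u v) b (X2 x u v)) (X2 x u v) = b.
Proof.
  destruct X12_orthonormal as (O11 & O22 & O12).
  rewrite !dot4_lin2_l, !dot4_lin2_r, (dot4_comm (X2 x u v)), O11, O22, O12.
  repeat split; ring.
Qed.

Lemma A_conformal (n : R -> R -> V4) (S T : V4) :
  minimal_sff x n u v S T ->
  A_X1 x n u v = lin2 (dot4 (n u v) S / L) (X1 x u v) (- dot4 (n u v) T / L) (X2 x u v) /\
  A_X2 x n u v = lin2 (- dot4 (n u v) T / L) (X1 x u v) (- dot4 (n u v) S / L) (X2 x u v).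
Proof.
  intros (H1 & H2 & H3 & H4).
  unfold A_X1, A_X2, tang, norm4. rewrite HE, HG, X1_conformal, X2_conformal.
  rewrite !dot4_scal4_l, !dot4_scal4_r, H1, H2, H3, H4, !scal4_opp_lin2.
  split; f_equal; field_sqrtL.
Qed.

Lemma detA_conformal (n : R -> R -> V4) (S T : V4) :
  minimal_sff x n u v S T ->
  detA x n u v = - (dot4 (n u v) S ^ 2 + dot4 (n u v) T ^ 2) / L ^ 2.
Proof.
  intros H. unfold detA. destruct (A_conformal n S T H) as [-> ->].
  rewrite !(proj1 (proj2 (dot4_lin2_X12 _ _ 0 0))), !(proj2 (proj2 (dot4_lin2_X12 _ _ 0 0))).
  field; lra.
Qed.

Lemma normal_curvature_conformal (n1 n2 : R -> R -> V4) (S T : V4) :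
  minimal_sff x n1 u v S T -> minimal_sff x n2 u v S T ->
  normal_curvature x n1 n2 u v =
    -2 * (dot4 (n1 u v) S * dot4 (n2 u v) T - dot4 (n2 u v) S * dot4 (n1 u v) T) / L ^ 2.
Proof.
  intros H1 H2. unfold normal_curvature.
  destruct (A_conformal n1 S T H1) as [-> ->], (A_conformal n2 S T H2) as [-> ->].
  rewrite !(proj1 (dot4_lin2_X12 _ _ _ _)).
  field; lra.
Qed.

Lemma curvatures_conformal (P : R -> R -> Prop) (n1 n2 : R -> R -> V4) (S T : V4) :
  normal_frame P x n1 n2 -> P u v ->
  minimal_sff x n1 u v S T -> minimal_sff x n2 u v S T ->
  gauss_curvature x n1 n2 u v = - gauss_numerator L (pu x u v) (pv x u v) S T / L ^ 3 /\
  normal_curvature x n1 n2 u v = -2 * det4 (pu x u v) (pv x u v) S T / L ^ 3.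
Proof.
  intros Hframe Huv H1 H2.
  destruct (Hframe u v Huv) as (N11 & N22 & N12 & N1X1 & N1X2 & N2X1 & N2X2 & Hdet & _).
  destruct X12_orthonormal as (O11 & O22 & O12).
  assert (Hon : orthonormal4 (X1 x u v) (X2 x u v) (n1 u v) (n2 u v))
    by (rewrite dot4_comm in N1X1, N1X2, N2X1, N2X2; unfold orthonormal4; tauto).
  split.
  - unfold gauss_curvature, gauss_numerator.
    rewrite (detA_conformal n1 S T H1), (detA_conformal n2 S T H2).
    rewrite (frame_parseval _ _ _ _ Hon Hdet S), (frame_parseval _ _ _ _ Hon Hdet T).
    rewrite X1_conformal, X2_conformal, !dot4_scal4_l, !(dot4_comm S), !(dot4_comm T).
    field_sqrtL.
  - rewrite (normal_curvature_conformal n1 n2 S T H1 H2).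
    pose proof (det4_frame_12 _ _ _ _ Hon Hdet S T) as Hdet12.
    rewrite X1_conformal, X2_conformal, det4_scal4_12 in Hdet12.
    rewrite <- Hdet12; field_sqrtL.
Qed.

End ConformalChart.

Definition normal_field (P : R -> R -> Prop) (x n : R -> R -> V4) : Prop :=
  forall u v, P u v ->
    dot4 (n u v) (X1 x u v) = 0 /\ dot4 (n u v) (X2 x u v) = 0 /\ partials_exist n u v.

Lemma normal_frame_fields (P : R -> R -> Prop) (x n1 n2 : R -> R -> V4) :
  normal_frame P x n1 n2 -> normal_field P x n1 /\ normal_field P x n2.
Proof. intros H; split; intros u v Huv; destruct (H u v Huv); tauto. Qed.

(** * Complex vectors *)

Definition C4 : Type := (C * C * C * C)%type.
Definition cc1 (F : C4) : C := fst (fst (fst F)).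
Definition cc2 (F : C4) : C := snd (fst (fst F)).
Definition cc3 (F : C4) : C := snd (fst F).
Definition cc4 (F : C4) : C := snd F.

Definition re4 (F : C4) : V4 := mk4 (Re (cc1 F)) (Re (cc2 F)) (Re (cc3 F)) (Re (cc4 F)).
Definition im4 (F : C4) : V4 := mk4 (Im (cc1 F)) (Im (cc2 F)) (Im (cc3 F)) (Im (cc4 F)).
Definition cscal4 (k : C) (F : C4) : C4 := (k * cc1 F, k * cc2 F, k * cc3 F, k * cc4 F)%C.

(* [cdot4] is complex bilinear, not hermitian; [hnorm4] is the hermitian squared norm. *)
Definition cdot4 (F G : C4) : C := (cc1 F * cc1 G + cc2 F * cc2 G + cc3 F * cc3 G + cc4 F * cc4 G)%C.
Definition hnorm4 (F : C4) : R :=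
  Cmod (cc1 F) ^ 2 + Cmod (cc2 F) ^ 2 + Cmod (cc3 F) ^ 2 + Cmod (cc4 F) ^ 2.

Definition has_cderiv4 (H : C -> C4) (z : C) (L : C4) : Prop :=
  has_cderiv (fun w => cc1 (H w)) z (cc1 L) /\ has_cderiv (fun w => cc2 (H w)) z (cc2 L) /\
  has_cderiv (fun w => cc3 (H w)) z (cc3 L) /\ has_cderiv (fun w => cc4 (H w)) z (cc4 L).

Ltac unfold_C4 :=
  unfold re4, im4, cscal4, cdot4, hnorm4, cc1, cc2, cc3, cc4, mk4, Defs.c1, Defs.c2, Defs.c3, Defs.c4,
    Re, Im, Ci, Cmult, Cplus, Cminus, Copp, Cinv, Cdiv, RtoC; simpl.

Lemma is_derive4_uv (H : C -> C4) (u v : R) (L : C4) :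
  has_cderiv4 H (uv_to_C u v) L ->
  is_derive4 (fun t => re4 (H (uv_to_C t v))) u (re4 L) /\
  is_derive4 (fun t => im4 (H (uv_to_C t v))) u (im4 L) /\
  is_derive4 (fun t => re4 (H (uv_to_C u t))) v (re4 (cscal4 Ci L)) /\
  is_derive4 (fun t => im4 (H (uv_to_C u t))) v (im4 (cscal4 Ci L)).
Proof.
  intros (H1 & H2 & H3 & H4).
  destruct (is_derive_uv_u _ _ _ _ H1), (is_derive_uv_u _ _ _ _ H2),
    (is_derive_uv_u _ _ _ _ H3), (is_derive_uv_u _ _ _ _ H4),
    (is_derive_uv_v _ _ _ _ H1), (is_derive_uv_v _ _ _ _ H2),
    (is_derive_uv_v _ _ _ _ H3), (is_derive_uv_v _ _ _ _ H4).
  unfold is_derive4; repeat match goal with |- _ /\ _ => split end; assumption.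
Qed.

Lemma dot4_re4_cscal4 (m : V4) (k : C) (F : C4) :
  dot4 m (re4 (cscal4 k F)) = Re k * dot4 m (re4 F) - Im k * dot4 m (im4 F).
Proof. unfold dot4; unfold_C4; ring. Qed.

Lemma dot4_im4_cscal4 (m : V4) (k : C) (F : C4) :
  dot4 m (im4 (cscal4 k F)) = Im k * dot4 m (re4 F) + Re k * dot4 m (im4 F).
Proof. unfold dot4; unfold_C4; ring. Qed.

Lemma re4_cscal4_Ci (F : C4) : re4 (cscal4 Ci F) = scal4 (-1) (im4 F).
Proof. unfold scal4; unfold_C4; f_equal; [f_equal; [f_equal|]|]; ring. Qed.

Lemma cscal4_cscal4 (a b : C) (F : C4) : cscal4 a (cscal4 b F) = cscal4 (a * b) F.
Proof. unfold cscal4, cc1, cc2, cc3, cc4; simpl; now rewrite !Cmult_assoc. Qed.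

Lemma cscal4_1 (F : C4) : cscal4 1 F = F.
Proof.
  destruct F as [[[f1 f2] f3] f4]; unfold cscal4, cc1, cc2, cc3, cc4; simpl.
  now rewrite !Cmult_1_l.
Qed.

Lemma orth_re4_im4_cscal4 (m : V4) (k : C) (F : C4) :
  dot4 m (re4 F) = 0 -> dot4 m (im4 F) = 0 ->
  dot4 m (re4 (cscal4 k F)) = 0 /\ dot4 m (im4 (cscal4 k F)) = 0.
Proof. intros H1 H2; rewrite dot4_re4_cscal4, dot4_im4_cscal4, H1, H2; split; ring. Qed.

Lemma orth_re4_im4_cscal4_inv (m : V4) (k : C) (F : C4) :
  k <> 0%C -> dot4 m (re4 (cscal4 k F)) = 0 -> dot4 m (im4 (cscal4 k F)) = 0 ->
  dot4 m (re4 F) = 0 /\ dot4 m (im4 F) = 0.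
Proof.
  intros Hk H1 H2. rewrite <- (cscal4_1 F), <- (Cinv_l k Hk), <- cscal4_cscal4.
  exact (orth_re4_im4_cscal4 m (/ k) _ H1 H2).
Qed.

Lemma isotropic_re4_im4 (F : C4) :
  cdot4 F F = 0%C ->
  dot4 (re4 F) (re4 F) = hnorm4 F / 2 /\ dot4 (im4 F) (im4 F) = hnorm4 F / 2 /\
  dot4 (re4 F) (im4 F) = 0.
Proof.
  intros H.
  assert (Hre : Re (cdot4 F F) = dot4 (re4 F) (re4 F) - dot4 (im4 F) (im4 F))
    by (unfold dot4; unfold_C4; ring).
  assert (Him : Im (cdot4 F F) = 2 * dot4 (re4 F) (im4 F)) by (unfold dot4; unfold_C4; ring).
  assert (Hn : hnorm4 F = dot4 (re4 F) (re4 F) + dot4 (im4 F) (im4 F))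
    by (unfold hnorm4; rewrite !Cmod2_alt; unfold dot4; unfold_C4; ring).
  rewrite H in Hre, Him; unfold Re, Im in Hre, Him; simpl in Hre, Him.
  repeat split; lra.
Qed.

Lemma cdot4_cscal4 (k : C) (F : C4) : cdot4 (cscal4 k F) (cscal4 k F) = (k * k * cdot4 F F)%C.
Proof. unfold cdot4, cscal4, cc1, cc2, cc3, cc4; simpl; ring. Qed.

Lemma hnorm4_cscal4 (k : C) (F : C4) : hnorm4 (cscal4 k F) = Cmod k ^ 2 * hnorm4 F.
Proof. unfold hnorm4, cscal4, cc1, cc2, cc3, cc4; simpl; rewrite !Cmod_mult; ring. Qed.

Lemma gauss_numerator_cscal4 (L : R) (k : C) (F G : C4) :
  gauss_numerator (Cmod k ^ 2 * L) (re4 (cscal4 k F)) (re4 (cscal4 Ci (cscal4 k F)))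
    (re4 (cscal4 k G)) (im4 (cscal4 k G))
  = (Cmod k ^ 2) ^ 2 * gauss_numerator L (re4 F) (re4 (cscal4 Ci F)) (re4 G) (im4 G).
Proof.
  rewrite Cmod2_alt.
  destruct k as [k1 k2], F as [[[[f1 f2] [f3 f4]] [f5 f6]] [f7 f8]],
    G as [[[[g1 g2] [g3 g4]] [g5 g6]] [g7 g8]].
  unfold gauss_numerator, dot4; unfold_C4; ring.
Qed.

Lemma det4_cscal4 (k : C) (F G : C4) :
  det4 (re4 (cscal4 k F)) (re4 (cscal4 Ci (cscal4 k F))) (re4 (cscal4 k G)) (im4 (cscal4 k G))
  = - (Cmod k ^ 2) ^ 2 * det4 (re4 F) (im4 F) (re4 G) (im4 G).
Proof.
  rewrite Cmod2_alt.
  destruct k as [k1 k2], F as [[[[f1 f2] [f3 f4]] [f5 f6]] [f7 f8]],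
    G as [[[[g1 g2] [g3 g4]] [g5 g6]] [g7 g8]].
  unfold det4, det3; unfold_C4; ring.
Qed.

Lemma Cmod_inv_sq (s m : C) : (s * s)%C = m -> m <> 0%C -> Cmod (/ s) ^ 2 = / Cmod m.
Proof.
  intros <- Hm.
  assert (Hs : s <> 0%C) by (intros ->; apply Hm; apply injective_projections; simpl; ring).
  assert (Hpos : 0 < Cmod s) by now apply Cmod_gt_0.
  rewrite Cmod_inv, Cmod_mult by exact Hs. field; lra.
Qed.

(** * The Weierstrass vector *)

(* The paper's [Phi] times [sqrt (g1' g2')]. *)
Definition weier (a b : C) : C4 :=
  (Ci / 2 * (a * b + 1), / 2 * (a * b - 1), / 2 * (a + b), Ci / 2 * (a - b))%C.

Definition weier_deriv (a b da db : C) : C4 :=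
  (Ci / 2 * (da * b + a * db), / 2 * (da * b + a * db), / 2 * (da + db), Ci / 2 * (da - db))%C.

Lemma weier_isotropic (a b : C) : cdot4 (weier a b) (weier a b) = 0%C.
Proof.
  destruct a as [a1 a2], b as [b1 b2].
  apply injective_projections; unfold weier; unfold_C4; field.
Qed.

Lemma hnorm4_weier (a b : C) : hnorm4 (weier a b) = (Cmod a ^ 2 + 1) * (Cmod b ^ 2 + 1) / 2.
Proof.
  unfold hnorm4; rewrite !Cmod2_alt.
  destruct a as [a1 a2], b as [b1 b2]; unfold weier; unfold_C4; field.
Qed.

Lemma has_cderiv4_weier (g1 g2 : C -> C) (z da db : C) :
  has_cderiv g1 z da -> has_cderiv g2 z db ->
  has_cderiv4 (fun w => weier (g1 w) (g2 w)) z (weier_deriv (g1 z) (g2 z) da db).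
Proof.
  intros H1 H2. pose proof (has_cderiv_mult _ _ _ _ _ H1 H2) as H12.
  unfold has_cderiv4, weier, weier_deriv, cc1, cc2, cc3, cc4; cbn [fst snd].
  split; [|split; [|split]]; (eapply has_cderiv_eq; [apply has_cderiv_scal|]).
  - apply has_cderiv_plus; [exact H12 | apply has_cderiv_const].
  - cbv beta; ring.
  - apply has_cderiv_minus; [exact H12 | apply has_cderiv_const].
  - cbv beta; ring.
  - exact (has_cderiv_plus _ _ _ _ _ H1 H2).
  - reflexivity.
  - exact (has_cderiv_minus _ _ _ _ _ H1 H2).
  - reflexivity.
Qed.

Lemma has_cderiv4_weierstrass_data (p1 p2 p3 p4 : C -> C) (z a b sv : C) :
  has_cderiv p1 z (Ci / 2 * ((a * b + 1) / sv))%C -> has_cderiv p2 z (/ 2 * ((a * b - 1) / sv))%C ->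
  has_cderiv p3 z (/ 2 * ((a + b) / sv))%C -> has_cderiv p4 z (Ci / 2 * ((a - b) / sv))%C ->
  has_cderiv4 (fun w => (p1 w, p2 w, p3 w, p4 w)) z (cscal4 (/ sv) (weier a b)).
Proof.
  intros H1 H2 H3 H4.
  unfold has_cderiv4, cscal4, weier, cc1, cc2, cc3, cc4; cbn [fst snd].
  repeat match goal with |- _ /\ _ => split end;
    (eapply has_cderiv_eq; [eassumption | unfold Cdiv; ring]).
Qed.

Lemma weier_gauss_numerator (a b da db : C) :
  gauss_numerator ((Cmod a ^ 2 + 1) * (Cmod b ^ 2 + 1) / 4)
    (re4 (weier a b)) (re4 (cscal4 Ci (weier a b)))
    (re4 (weier_deriv a b da db)) (im4 (weier_deriv a b da db))
  = (Cmod da ^ 2 * (Cmod b ^ 2 + 1) ^ 2 + Cmod db ^ 2 * (Cmod a ^ 2 + 1) ^ 2) / 8.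
Proof.
  rewrite !Cmod2_alt.
  destruct a as [a1 a2], b as [b1 b2], da as [p1 p2], db as [q1 q2].
  unfold gauss_numerator, dot4, weier, weier_deriv; unfold_C4; field.
Qed.

Lemma weier_det4 (a b da db : C) :
  det4 (re4 (weier a b)) (im4 (weier a b)) (re4 (weier_deriv a b da db)) (im4 (weier_deriv a b da db))
  = (Cmod da ^ 2 * (Cmod b ^ 2 + 1) ^ 2 - Cmod db ^ 2 * (Cmod a ^ 2 + 1) ^ 2) / 16.
Proof.
  rewrite !Cmod2_alt.
  destruct a as [a1 a2], b as [b1 b2], da as [p1 p2], db as [q1 q2].
  unfold det4, det3, weier, weier_deriv; unfold_C4; field.
Qed.

(** * The Weierstrass surface *)

Section WeierstrassSurface.

Variables (D : C -> Prop) (g1 g2 dg1 dg2 s : C -> C) (p : C -> C4).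
Hypothesis HD : open D.
Hypothesis Hg1 : forall z, D z -> has_cderiv g1 z (dg1 z).
Hypothesis Hg2 : forall z, D z -> has_cderiv g2 z (dg2 z).
Hypothesis Hnz : forall z, D z -> (dg1 z * dg2 z)%C <> 0%C.
Hypothesis Hs2 : forall z, D z -> (s z * s z)%C = (dg1 z * dg2 z)%C.
Hypothesis Hp : forall z, D z -> has_cderiv4 p z (cscal4 (/ s z) (weier (g1 z) (g2 z))).

Definition surface (u v : R) : V4 := re4 (p (uv_to_C u v)).

Definition chart_domain (u v : R) : Prop := D (uv_to_C u v).

Definition conformal_factor (z : C) : R :=
  Cmod (/ s z) ^ 2 * ((Cmod (g1 z) ^ 2 + 1) * (Cmod (g2 z) ^ 2 + 1) / 4).

Lemma Cmod_inv_s_sq (z : C) : D z -> Cmod (/ s z) ^ 2 = / Cmod (dg1 z * dg2 z)%C.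
Proof. intros Hz; exact (Cmod_inv_sq _ _ (Hs2 z Hz) (Hnz z Hz)). Qed.

Lemma inv_s_neq0 (z : C) : D z -> (/ s z)%C <> 0%C.
Proof.
  intros Hz Hk. pose proof (Cmod_inv_s_sq z Hz) as E.
  pose proof (proj1 (Cmod_gt_0 _) (Hnz z Hz)) as Hm.
  rewrite Hk, Cmod_0 in E. pose proof (Rinv_0_lt_compat _ Hm). nra.
Qed.

Lemma conformal_factor_pos (z : C) : D z -> 0 < conformal_factor z.
Proof.
  intros Hz. unfold conformal_factor.
  pose proof (proj1 (Cmod_gt_0 _) (inv_s_neq0 z Hz)).
  pose proof (pow2_ge_0 (Cmod (g1 z))); pose proof (pow2_ge_0 (Cmod (g2 z))).
  apply Rmult_lt_0_compat; [apply pow_lt; lra | nra].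
Qed.

Lemma surface_partials (u v : R) :
  chart_domain u v ->
  pu surface u v = re4 (cscal4 (/ s (uv_to_C u v)) (weier (g1 (uv_to_C u v)) (g2 (uv_to_C u v)))) /\
  pv surface u v =
    re4 (cscal4 Ci (cscal4 (/ s (uv_to_C u v)) (weier (g1 (uv_to_C u v)) (g2 (uv_to_C u v))))).
Proof.
  intros Hz. destruct (is_derive4_uv _ _ _ _ (Hp _ Hz)) as (Hu & _ & Hv & _).
  split; [exact (pu_is_derive4 surface u v _ Hu) | exact (pv_is_derive4 surface u v _ Hv)].
Qed.

Lemma surface_conformal (u v : R) :
  chart_domain u v ->
  dot4 (pu surface u v) (pu surface u v) = conformal_factor (uv_to_C u v) /\
  dot4 (pv surface u v) (pv surface u v) = conformal_factor (uv_to_C u v) /\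
  dot4 (pu surface u v) (pv surface u v) = 0.
Proof.
  intros Hz. destruct (surface_partials u v Hz) as [-> ->].
  set (z := uv_to_C u v) in *; set (W := weier (g1 z) (g2 z)).
  assert (Hiso : cdot4 (cscal4 (/ s z) W) (cscal4 (/ s z) W) = 0%C)
    by (rewrite cdot4_cscal4; unfold W; rewrite weier_isotropic; ring).
  destruct (isotropic_re4_im4 _ Hiso) as (Hre & Him & Hri).
  rewrite re4_cscal4_Ci, dot4_scal4_l, !dot4_scal4_r, Hre, Him, Hri.
  unfold conformal_factor, W; rewrite hnorm4_cscal4, hnorm4_weier.
  repeat split; field.
Qed.

Lemma surface_normal_orth (n : R -> R -> V4) (u v : R) :
  normal_field chart_domain surface n -> chart_domain u v ->
  dot4 (n u v) (re4 (weier (g1 (uv_to_C u v)) (g2 (uv_to_C u v)))) = 0 /\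
  dot4 (n u v) (im4 (weier (g1 (uv_to_C u v)) (g2 (uv_to_C u v)))) = 0.
Proof.
  intros Hn Hz. destruct (Hn u v Hz) as (H1 & H2 & _).
  destruct (surface_conformal u v Hz) as (HE & HG & _).
  pose proof (conformal_factor_pos _ Hz) as HL.
  assert (Hk : / sqrt (conformal_factor (uv_to_C u v)) <> 0)
    by (apply Rinv_neq_0_compat, Rgt_not_eq, sqrt_lt_R0, HL).
  rewrite (X1_conformal _ _ _ _ HE) in H1. rewrite (X2_conformal _ _ _ _ HG) in H2.
  apply dot4_scal4_r_eq0 in H1, H2; try exact Hk.
  destruct (surface_partials u v Hz) as [Hu Hv]. rewrite Hu in H1. rewrite Hv, re4_cscal4_Ci in H2.
  apply dot4_scal4_r_eq0 in H2; [|lra].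
  exact (orth_re4_im4_cscal4_inv _ _ _ (inv_s_neq0 _ Hz) H1 H2).
Qed.

Lemma surface_normal_derivs (n : R -> R -> V4) (u v : R) :
  normal_field chart_domain surface n -> chart_domain u v ->
  let z := uv_to_C u v in
  let W := weier (g1 z) (g2 z) in
  let W' := weier_deriv (g1 z) (g2 z) (dg1 z) (dg2 z) in
  dot4 (pu n u v) (re4 W) = - dot4 (n u v) (re4 W') /\
  dot4 (pu n u v) (im4 W) = - dot4 (n u v) (im4 W') /\
  dot4 (pv n u v) (re4 W) = - dot4 (n u v) (re4 (cscal4 Ci W')) /\
  dot4 (pv n u v) (im4 W) = - dot4 (n u v) (im4 (cscal4 Ci W')).
Proof.
  intros Hn Hz; cbv zeta.
  destruct (Hn u v Hz) as (_ & _ & Hpe).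
  destruct (partials_exist_is_derive4 n u v Hpe) as [Nu Nv].
  destruct (is_derive4_uv _ _ _ _ (has_cderiv4_weier g1 g2 _ _ _ (Hg1 _ Hz) (Hg2 _ Hz)))
    as (Wu_re & Wu_im & Wv_re & Wv_im).
  destruct (locally_uv D u v HD Hz) as [Lu Lv].
  pose proof (filter_imp _ _ (fun t Ht => surface_normal_orth n t v Hn Ht) Lu) as Ou.
  pose proof (filter_imp _ _ (fun t Ht => surface_normal_orth n u t Hn Ht) Lv) as Ov.
  repeat split.
  - exact (dot4_deriv_orth _ _ _ _ _ Nu Wu_re (filter_imp _ _ (fun t => @proj1 _ _) Ou)).
  - exact (dot4_deriv_orth _ _ _ _ _ Nu Wu_im (filter_imp _ _ (fun t => @proj2 _ _) Ou)).
  - exact (dot4_deriv_orth _ _ _ _ _ Nv Wv_re (filter_imp _ _ (fun t => @proj1 _ _) Ov)).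
  - exact (dot4_deriv_orth _ _ _ _ _ Nv Wv_im (filter_imp _ _ (fun t => @proj2 _ _) Ov)).
Qed.

Lemma surface_minimal_sff (n : R -> R -> V4) (u v : R) :
  normal_field chart_domain surface n -> chart_domain u v ->
  let z := uv_to_C u v in
  let dPhi := cscal4 (/ s z) (weier_deriv (g1 z) (g2 z) (dg1 z) (dg2 z)) in
  minimal_sff surface n u v (re4 dPhi) (im4 dPhi).
Proof.
  intros Hn Hz; cbv zeta.
  destruct (surface_normal_derivs n u v Hn Hz) as (Ru & Iu & Rv & Iv).
  rewrite dot4_re4_cscal4 in Rv. rewrite dot4_im4_cscal4 in Iv.
  unfold minimal_sff. destruct (surface_partials u v Hz) as [-> ->].
  repeat (rewrite dot4_re4_cscal4 || rewrite dot4_im4_cscal4).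
  rewrite Ru, Iu, Rv, Iv. cbn [Re Im Ci fst snd].
  repeat split; ring.
Qed.

Lemma conformal_factor_eq (z : C) :
  D z ->
  conformal_factor z =
    (Cmod (g1 z) ^ 2 + 1) * (Cmod (g2 z) ^ 2 + 1) / (4 * Cmod (dg1 z * dg2 z)%C).
Proof.
  intros Hz. pose proof (proj1 (Cmod_gt_0 _) (Hnz z Hz)).
  unfold conformal_factor; rewrite Cmod_inv_s_sq by exact Hz. field; lra.
Qed.

Lemma surface_first_fundamental_form (u v : R) :
  chart_domain u v ->
  let z := uv_to_C u v in
  ffF surface u v = 0 /\ ffG surface u v = ffE surface u v /\
  ffE surface u v = (Cmod (g1 z) ^ 2 + 1) * (Cmod (g2 z) ^ 2 + 1) / (4 * Cmod (dg1 z * dg2 z)%C).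
Proof.
  intros Hz; cbv zeta. destruct (surface_conformal u v Hz) as (HE & HG & HF).
  unfold ffE, ffF, ffG. rewrite HE, HG, HF, conformal_factor_eq by exact Hz. auto.
Qed.

Lemma surface_curvatures (n1 n2 : R -> R -> V4) (u v : R) :
  normal_frame chart_domain surface n1 n2 -> chart_domain u v ->
  let z := uv_to_C u v in
  let a1 := Cmod (g1 z) ^ 2 + 1 in
  let a2 := Cmod (g2 z) ^ 2 + 1 in
  let m := Cmod (dg1 z * dg2 z)%C in
  gauss_curvature surface n1 n2 u v =
    (-8 * m) / (a1 * a2) * (Cmod (dg1 z) ^ 2 / a1 ^ 2 + Cmod (dg2 z) ^ 2 / a2 ^ 2) /\
  normal_curvature surface n1 n2 u v =
    (8 * m) / (a1 * a2) * (Cmod (dg1 z) ^ 2 / a1 ^ 2 - Cmod (dg2 z) ^ 2 / a2 ^ 2).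
Proof.
  intros Hframe Hz; cbv zeta.
  destruct (normal_frame_fields _ _ _ _ Hframe) as [N1 N2].
  destruct (surface_conformal u v Hz) as (HE & HG & HF).
  destruct (curvatures_conformal _ _ _ _ HE HG HF (conformal_factor_pos _ Hz) _ n1 n2 _ _ Hframe Hz
              (surface_minimal_sff n1 u v N1 Hz) (surface_minimal_sff n2 u v N2 Hz)) as [-> ->].
  destruct (surface_partials u v Hz) as [-> ->].
  unfold conformal_factor.
  rewrite gauss_numerator_cscal4, weier_gauss_numerator, det4_cscal4, weier_det4, Cmod_inv_s_sq
    by exact Hz.
  pose proof (proj1 (Cmod_gt_0 _) (Hnz _ Hz)).
  pose proof (pow2_ge_0 (Cmod (g1 (uv_to_C u v)))); pose proof (pow2_ge_0 (Cmod (g2 (uv_to_C u v)))).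
  split; field; repeat split; lra.
Qed.

End WeierstrassSurface.

Theorem mainTheorem5
  (D : C -> Prop) (g1 g2 dg1 dg2 s p1 p2 p3 p4 : C -> C)
  (HD : is_domain D)
  (Hg1 : forall z, D z -> has_cderiv g1 z (dg1 z))
  (Hg2 : forall z, D z -> has_cderiv g2 z (dg2 z))
  (Hnz : forall z, D z -> (dg1 z * dg2 z)%C <> 0%C)
  (Hs : holomorphic_on D s)
  (Hs2 : forall z, D z -> (s z * s z)%C = (dg1 z * dg2 z)%C)
  (Hp1 : forall z, D z -> has_cderiv p1 z (Ci / 2 * ((g1 z * g2 z + 1) / s z))%C)
  (Hp2 : forall z, D z -> has_cderiv p2 z (/ 2 * ((g1 z * g2 z - 1) / s z))%C)
  (Hp3 : forall z, D z -> has_cderiv p3 z (/ 2 * ((g1 z + g2 z) / s z))%C)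
  (Hp4 : forall z, D z -> has_cderiv p4 z (Ci / 2 * ((g1 z - g2 z) / s z))%C) :
  let x : R -> R -> V4 := fun u v =>
    let z := (RtoC u + Ci * RtoC v)%C in
    mk4 (Re (p1 z)) (Re (p2 z)) (Re (p3 z)) (Re (p4 z)) in
  let P : R -> R -> Prop := fun u v => D (RtoC u + Ci * RtoC v)%C in
  (forall u v, P u v ->
     let z := (RtoC u + Ci * RtoC v)%C in
     ffF x u v = 0 /\ ffG x u v = ffE x u v /\
     ffE x u v = (Cmod (g1 z) ^ 2 + 1) * (Cmod (g2 z) ^ 2 + 1)
                 / (4 * Cmod (dg1 z * dg2 z)%C)) /\
  (forall n1 n2 : R -> R -> V4, normal_frame P x n1 n2 ->
   forall u v, P u v ->
     let z := (RtoC u + Ci * RtoC v)%C in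
     let a1 := Cmod (g1 z) ^ 2 + 1 in
     let a2 := Cmod (g2 z) ^ 2 + 1 in
     let m := Cmod (dg1 z * dg2 z)%C in
     gauss_curvature x n1 n2 u v =
       (-8 * m) / (a1 * a2) * (Cmod (dg1 z) ^ 2 / a1 ^ 2 + Cmod (dg2 z) ^ 2 / a2 ^ 2) /\
     normal_curvature x n1 n2 u v =
       (8 * m) / (a1 * a2) * (Cmod (dg1 z) ^ 2 / a1 ^ 2 - Cmod (dg2 z) ^ 2 / a2 ^ 2)).
Proof.
  intros x P.
  destruct HD as [HDopen _].
  set (p := fun z => (p1 z, p2 z, p3 z, p4 z) : C4).
  assert (Hp : forall z, D z -> has_cderiv4 p z (cscal4 (/ s z) (weier (g1 z) (g2 z))))
    by (intros z Hz; apply has_cderiv4_weierstrass_data; auto).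
  split.
  - intros u v Huv.
    exact (surface_first_fundamental_form D g1 g2 dg1 dg2 s p Hnz Hs2 Hp u v Huv).
  - intros n1 n2 Hframe u v Huv.
    exact (surface_curvatures D g1 g2 dg1 dg2 s p HDopen Hg1 Hg2 Hnz Hs2 Hp n1 n2 u v Hframe Huv).
Qed.
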